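(* Let $\beta>1$. For all $x,y\in\mathbb R$, $\Theta_1(x,y)\ge\Theta_2(x,y)$.
   Context: For $\beta>1$ and real $x\ne y$ define $\Theta_1(x,y)=\Big(\frac1{2\beta-1}\frac{x|x|^{2(\beta-1)}-y|y|^{2(\beta-1)}}{x-y}\Big)^{\frac1{2(\beta-1)}}$ and $\Theta_2(x,y)=\Big(\frac1\beta\frac{x|x|^{\beta-1}-y|y|^{\beta-1}}{x-y}\Big)^{\frac1{\beta-1}}$ (the quotients are positive since both numerator maps are strictly increasing), and $\Theta_1(x,x)=\Theta_2(x,x)=0$. These are the absolute values of mean-value points for $t\mapsto t|t|^{2(\beta-1)}$ and $t\mapsto t|t|^{\beta-1}$ on $[x,y]$. *)

From Stdlib Require Import Reals Lra.
Open Scope R_scope.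

(* Real power of a nonnegative base, with the usual convention 0^a = 0
   (for the exponents a > 0 used here).  Stdlib's Rpower is exp (a * ln x),
   which gives Rpower 0 a = 1, hence the case split. *)
Definition rpow (x a : R) : R := if Rle_dec x 0 then 0 else Rpower x a.

Definition spow (p t : R) : R := t * rpow (Rabs t) p.

Definition Theta1 (b x y : R) : R :=
  if Req_EM_T x y then 0
  else rpow (/ (2 * b - 1) * ((spow (2 * (b - 1)) x - spow (2 * (b - 1)) y) / (x - y)))
            (/ (2 * (b - 1))).

Definition Theta2 (b x y : R) : R :=
  if Req_EM_T x y then 0
  else rpow (/ b * ((spow (b - 1) x - spow (b - 1) y) / (x - y)))
            (/ (b - 1)).

(* With p = beta - 1, h t = |t|^p, G t = t|t|^p / (p+1) and
   F t = t|t|^(2p) / (2p+1) are antiderivatives of h and h^2.  The radicands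
   of Theta_2^p and Theta_1^(2p) are the means of h and of h^2 over [x, y],
   so the inequality is Cauchy-Schwarz: (mean h)^2 <= mean (h^2).  That in
   turn follows because s |-> F s - 2 a G s + a^2 s has derivative
   (h s - a)^2 >= 0 for every constant a; take a = mean h. *)
From Stdlib Require Import Reals Lra.
From Coquelicot Require Import Coquelicot.
Open Scope R_scope.

Lemma rpow_ge0 x a : 0 <= rpow x a.
Proof.
  unfold rpow; destruct (Rle_dec x 0); [lra|].
  left; apply exp_pos.
Qed.

Lemma rpow_pos x a : 0 < x -> rpow x a = Rpower x a.
Proof. intros Hx; unfold rpow; destruct (Rle_dec x 0); [lra|reflexivity]. Qed.

Lemma rpow_0 a : rpow 0 a = 0.
Proof. unfold rpow; destruct (Rle_dec 0 0); [reflexivity|lra]. Qed.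

Lemma rpow_Rabs_double t p : rpow (Rabs t) (2 * p) = rpow (Rabs t) p ^ 2.
Proof.
  destruct (Req_dec t 0) as [->|Ht].
  - rewrite Rabs_R0, !rpow_0; ring.
  - assert (0 < Rabs t) by (apply Rabs_pos_lt; exact Ht).
    rewrite !rpow_pos by assumption.
    replace (2 * p) with (p + p) by ring.
    rewrite Rpower_plus; ring.
Qed.

(* For b <= 0 the left side is the junk value 0 of [rpow]. *)
Lemma rpow_inv_le_of_sqr_le p a b :
  0 < p -> b ^ 2 <= a -> rpow b (/ p) <= rpow a (/ (2 * p)).
Proof.
  intros Hp Hba.
  unfold rpow at 1; destruct (Rle_dec b 0) as [_|Hb]; [apply rpow_ge0|].
  assert (Hb2 : 0 < b ^ 2) by nra.
  rewrite rpow_pos by lra.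
  replace (Rpower b (/ p)) with (Rpower (b ^ 2) (/ (2 * p))).
  - apply Rle_Rpower_l; [left; apply Rinv_0_lt_compat|]; lra.
  - rewrite <- (Rpower_pow 2 b) by lra.
    rewrite Rpower_mult; f_equal; simpl; field; lra.
Qed.

Lemma spow_opp q t : spow q (- t) = - spow q t.
Proof. unfold spow; rewrite Rabs_Ropp; ring. Qed.

Lemma is_derive_spow_pos q t :
  0 < t -> is_derive (spow q) t ((q + 1) * rpow (Rabs t) q).
Proof.
  intros Ht.
  apply is_derive_ext_loc with (f := fun s => Rpower s (q + 1)).
  - exists (mkposreal t Ht); intros s Hs.
    apply Rabs_def2 in Hs; change (s - t < t /\ - t < s - t) in Hs.
    unfold spow; rewrite Rabs_pos_eq, rpow_pos by lra.
    rewrite Rpower_plus, Rpower_1 by lra; apply Rmult_comm.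
  - rewrite Rabs_pos_eq, rpow_pos by lra.
    apply is_derive_Reals.
    replace q with (q + 1 - 1) at 2 by ring.
    apply derivable_pt_lim_power; exact Ht.
Qed.

(* At 0 the difference quotient of [spow q] is |h|^q, which tends to 0. *)
Lemma is_derive_spow_0 q : 0 < q -> is_derive (spow q) 0 0.
Proof.
  intros Hq; apply is_derive_Reals; intros eps Heps.
  assert (Hd : 0 < Rpower eps (/ q)) by apply exp_pos.
  exists (mkposreal _ Hd); intros h Hh Hhd; simpl in Hhd.
  assert (Hh0 : 0 < Rabs h) by (apply Rabs_pos_lt; exact Hh).
  unfold spow; rewrite Rplus_0_l, Rabs_R0, rpow_0, rpow_pos by exact Hh0.
  replace ((h * Rpower (Rabs h) q - 0 * 0) / h - 0) with (Rpower (Rabs h) q)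
    by (field; exact Hh).
  rewrite Rabs_pos_eq by (left; apply exp_pos).
  replace eps with (Rpower (Rpower eps (/ q)) q).
  - apply Rlt_Rpower_l; lra.
  - rewrite Rpower_mult, Rinv_l, Rpower_1 by lra; reflexivity.
Qed.

Lemma is_derive_spow q t :
  0 < q -> is_derive (spow q) t ((q + 1) * rpow (Rabs t) q).
Proof.
  intros Hq; destruct (Rtotal_order t 0) as [Ht|[->|Ht]].
  - apply is_derive_ext with (f := fun s => - spow q (- s)).
    { intros s; rewrite spow_opp; apply Ropp_involutive. }
    apply is_derive_Reals.
    replace ((q + 1) * rpow (Rabs t) q)
      with (- ((q + 1) * rpow (Rabs (- t)) q * - (1)))
      by (rewrite Rabs_Ropp; ring).
    apply derivable_pt_lim_opp, (derivable_pt_lim_comp Ropp (spow q)).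
    + apply derivable_pt_lim_opp, derivable_pt_lim_id.
    + apply is_derive_Reals, is_derive_spow_pos; lra.
  - rewrite Rabs_R0, rpow_0, Rmult_0_r; apply is_derive_spow_0; exact Hq.
  - apply is_derive_spow_pos; exact Ht.
Qed.

Lemma is_derive_spow_normalized q t :
  0 < q -> is_derive (fun s => / (q + 1) * spow q s) t (rpow (Rabs t) q).
Proof.
  intros Hq.
  replace (rpow (Rabs t) q) with (/ (q + 1) * ((q + 1) * rpow (Rabs t) q))
    by (field; lra).
  apply is_derive_scal, is_derive_spow; exact Hq.
Qed.

Lemma le_of_derive_ge0 f f' x y :
  (forall c, is_derive f c (f' c)) -> (forall c, 0 <= f' c) ->
  x <= y -> f x <= f y.
Proof.
  intros Df Hf' Hxy; destruct (Req_dec x y) as [->|Hne]; [lra|].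
  destruct (MVT_cor2 f f' x y ltac:(lra)
              (fun c _ => proj1 (is_derive_Reals _ _ _) (Df c))) as [c [E _]].
  pose proof (Hf' c); nra.
Qed.

Lemma mul_sub_ge0_of_derive_ge0 f f' x y :
  (forall c, is_derive f c (f' c)) -> (forall c, 0 <= f' c) ->
  0 <= (x - y) * (f x - f y).
Proof.
  intros Df Hf'; destruct (Rle_dec x y).
  - pose proof (le_of_derive_ge0 f f' x y Df Hf'); nra.
  - pose proof (le_of_derive_ge0 f f' y x Df Hf'); nra.
Qed.

Section MeanSquare.

Variables F G h : R -> R.
Hypothesis F_deriv : forall t, is_derive F t (h t ^ 2).
Hypothesis G_deriv : forall t, is_derive G t (h t).

Lemma sqr_mean_le_mean_sqr x y :
  x <> y -> ((G x - G y) / (x - y)) ^ 2 <= (F x - F y) / (x - y).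
Proof.
  intros Hxy; set (a := (G x - G y) / (x - y)).
  set (K := fun s => F s - 2 * a * G s + a ^ 2 * s).
  assert (DK : forall c, is_derive K c ((h c - a) ^ 2)).
  { intros c; unfold K.
    replace ((h c - a) ^ 2) with (h c ^ 2 - 2 * a * h c + a ^ 2 * 1) by ring.
    apply @is_derive_plus; [apply @is_derive_minus|].
    - apply F_deriv.
    - apply is_derive_scal, G_deriv.
    - apply is_derive_scal, is_derive_Reals, derivable_pt_lim_id. }
  pose proof (mul_sub_ge0_of_derive_ge0 K _ x y DK (fun c => pow2_ge_0 _)) as HK.
  assert (Hu : 0 < (x - y) ^ 2) by (apply pow2_gt_0; lra).
  assert (E : (F x - F y) / (x - y) - a ^ 2
              = (x - y) * (K x - K y) / (x - y) ^ 2)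
    by (unfold K, a; field; lra).
  pose proof (Rdiv_le_0_compat _ _ HK Hu); lra.
Qed.

End MeanSquare.

Theorem lemma4p4 (beta : R) (hbeta : 1 < beta) (x y : R) :
  Theta1 beta x y >= Theta2 beta x y.
Proof.
  unfold Theta1, Theta2; destruct (Req_EM_T x y) as [_|Hxy]; [lra|].
  set (p := beta - 1); assert (Hp : 0 < p) by (unfold p; lra).
  set (G := fun s => / (p + 1) * spow p s).
  set (F := fun s => / (2 * p + 1) * spow (2 * p) s).
  assert (HFG : ((G x - G y) / (x - y)) ^ 2 <= (F x - F y) / (x - y)).
  { apply (sqr_mean_le_mean_sqr F G (fun t => rpow (Rabs t) p)); [| |exact Hxy].
    - intros t; rewrite <- rpow_Rabs_double.
      apply (is_derive_spow_normalized (2 * p)); lra.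
    - intros t; apply (is_derive_spow_normalized p); exact Hp. }
  apply Rle_ge, rpow_inv_le_of_sqr_le; [exact Hp|].
  replace (/ beta * ((spow p x - spow p y) / (x - y)))
    with ((G x - G y) / (x - y)) by (unfold G, p; field; lra).
  replace (/ (2 * beta - 1) * ((spow (2 * p) x - spow (2 * p) y) / (x - y)))
    with ((F x - F y) / (x - y)) by (unfold F, p; field; lra).
  exact HFG.
Qed.
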